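(* Under the sampling rule of F-TaS (described in the context), run indefinitely on the $K$-armed unit-variance Gaussian bandit with $\theta\in\Theta$, with either pre-specified or $\theta$-dependent fairness rates, every arm is sampled infinitely often: $\mathbb{P}_\theta(\lim_{t\to\infty}N_a(t)=\infty)=1$ for all $a\in[K]$.
   Context: Bandit model: arms $[K]$, unknown $\theta\in\Theta:=\{\theta\in\mathbb{R}^K:\arg\max_a\theta_a\text{ unique}\}$, reward $r_t\sim\mathcal N(\theta_{a_t},1)$. $N_a(t)=\sum_{s\le t}\mathbf1\{a_s=a\}$. Fairness rates: pre-specified $p\in[0,1]^K$ with $p_{\rm sum}=\sum_ap_a\le1$, or continuous $p:\mathbb{R}^K\to[0,1]^K$ with sum at most $1$. $\Sigma_p=\{w\in[0,1]^K:w\ge p,\sum_aw_a=1\}$; for a parameter $\lambda$ with unique best arm $a^\star_\lambda$ and gaps $\Delta_a(\lambda)$, $w^\star_p(\lambda)\in\arg\min_{w\in\Sigma_p}\max_{a\ne a^\star_\lambda}(w_a^{-1}+w_{a^\star_\lambda}^{-1})/\Delta_a(\lambda)^2$ (with $p=p(\lambda)$ in the $\theta$-dependent case). F-TaS sampling rule: $\epsilon_t=1/(2\sqrt t)$; pre-specified case with $K_0=|\{a:p_a=0\}|$: if $K_0=0$, $\pi_{c,a}=p_a+(1-p_{\rm sum})/K$; otherwise $\pi_{c,a}=p_a$ if $p_a>0$ and $(1-p_{\rm sum})/K_0$ if $p_a=0$; $\theta$-dependent case: $\pi_{c,a}=1/K$. At round $t$, $a_t\sim\pi(t)=(1-\epsilon_t)w^\star_p(\hat\theta)+\epsilon_t\pi_c$,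 $\hat\theta$ the current empirical means (fixed convention when undefined). *)

From HB Require Import structures.
From mathcomp Require Import all_boot all_order all_algebra.
From mathcomp Require Import all_classical all_reals all_analysis.
From mathcomp Require Import normal_distribution.

Set Implicit Arguments.
Unset Strict Implicit.
Unset Printing Implicit Defensive.

Import Order.TTheory GRing.Theory Num.Theory.
Import numFieldNormedType.Exports.

Local Open Scope classical_set_scope.
Local Open Scope ring_scope.

Section FTaS.
Variables (R : realType) (K : nat).

Definition crd (v : 'rV[R]_K) (i : 'I_K) : R := v ord0 i.

Definition is_best (lam : 'rV[R]_K) (b : 'I_K) : Prop :=
  forall a, a != b -> crd lam a < crd lam b.

Definition in_Theta (lam : 'rV[R]_K) : Prop := exists b, is_best lam b.

Definition valid_rates (p : 'rV[R]_K) : Prop :=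
  (forall a, 0 <= crd p a <= 1) /\ \sum_a crd p a <= 1.

Definition in_Sigma (p w : 'rV[R]_K) : Prop :=
  (forall a, crd p a <= crd w a /\ 0 <= crd w a <= 1) /\ \sum_a crd w a = 1.

Definition inve (x : R) : \bar R := if x == 0 then +oo%E else (x^-1)%:E.

Definition ftas_obj (lam : 'rV[R]_K) (b : 'I_K) (w : 'rV[R]_K) : \bar R :=
  (\big[Order.max/-oo]_(a | a != b)
     ((inve (crd w a) + inve (crd w b)) *
      (((crd lam b - crd lam a) ^+ 2)^-1)%:E))%E.

(** [wsel] is a (fixed-convention) selection of w*_{p}(·):
    it always returns an element of Σ_{p(lam)}, and whenever lam has a
    unique best arm b it returns a minimiser of the objective over Σ_{p(lam)}. *)
Definition is_wstar (p : 'rV[R]_K -> 'rV[R]_K) (wsel : 'rV[R]_K -> 'rV[R]_K) : Prop :=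
  forall lam, in_Sigma (p lam) (wsel lam) /\
    forall b, is_best lam b ->
      forall w, in_Sigma (p lam) w -> (ftas_obj lam b (wsel lam) <= ftas_obj lam b w)%E.

Definition K0 (p : 'rV[R]_K) : nat := #|[set a | crd p a == 0]|.

Definition pic_pre (p : 'rV[R]_K) : 'rV[R]_K :=
  let psum := \sum_a crd p a in
  \row_a (if K0 p == 0%N then crd p a + (1 - psum) / K%:R
          else if crd p a > 0 then crd p a else (1 - psum) / (K0 p)%:R).

Definition pic_unif : 'rV[R]_K := \row_a (K%:R)^-1.

Definition eps_t (t : nat) : R := 1 / (2 * Num.sqrt (t%:R)).

Variables (Omega : Type) (arm : nat -> Omega -> 'I_K) (rew : nat -> Omega -> R).
(* Rounds are t = 1, 2, ...; arm t / rew t are the arm pulled / reward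
   observed at round t (the values at index 0 are never used). *)

Definition Npulls (a : 'I_K) (t : nat) (w : Omega) : nat :=
  (\sum_(1 <= s < t.+1) (arm s w == a))%N.

(** Empirical mean vector after t rounds; [theta0 a] is the fixed
    convention used for arms not yet pulled. *)
Definition theta_hat (theta0 : 'rV[R]_K) (t : nat) (w : Omega) : 'rV[R]_K :=
  \row_a (if Npulls a t w == 0%N then crd theta0 a
          else (\sum_(1 <= s < t.+1 | arm s w == a) rew s w) / (Npulls a t w)%:R).

(** Sampling distribution at round t (t >= 1), computed from the data of
    rounds 1..t-1:  π(t) = (1-ε_t) w*_p(θ̂) + ε_t π_c. *)
Definition ftas_pi (theta0 : 'rV[R]_K) (wsel : 'rV[R]_K -> 'rV[R]_K)
  (pic : 'rV[R]_K) (t : nat) (w : Omega) (a : 'I_K) : R :=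
  (1 - eps_t t) * crd (wsel (theta_hat theta0 t.-1 w)) a + eps_t t * crd pic a.

End FTaS.

Definition is_filtration d (T : measurableType d) (F : nat -> set (set T)) : Prop :=
  (forall t, sigma_algebra setT (F t)) /\
  (forall t, F t `<=` measurable) /\
  (forall s t, (s <= t)%N -> F s `<=` F t).

From HB Require Import structures.
From mathcomp Require Import all_boot all_order all_algebra.
From mathcomp Require Import all_classical all_reals all_analysis.
From mathcomp Require Import normal_distribution.
From mathcomp Require Import ring lra.
Import Order.TTheory GRing.Theory Num.Theory.
Import numFieldNormedType.Exports.
Local Open Scope classical_set_scope.
Local Open Scope ring_scope.

(* Whatever happened before round t, F-TaS draws arm a with conditional
   probability at least rho_t = eps_t pi_c(a), and pi_c(a) > 0 under both kinds
   of fairness rates.  Since eps_t = 1/(2 sqrt t), the series of rho_t diverges.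
   If y_t is the probability that a is not drawn in rounds s+1..t, the
   conditional bound gives y_(t+1) <= (1 - rho_(t+1)) y_t, hence
   y_t (1 + rho_(s+1) + ... + rho_t) <= 1 and y_t -> 0.  So almost surely a is
   drawn after every round s, which is N_a(t) -> oo.  Nothing about the rewards
   or the optimisation defining w*_p is used beyond w*_p >= 0. *)

Section real_sequences.
Context {R : realType}.

Lemma decay_mul_series_le1 (x y : R ^nat) (s : nat) :
  (forall t, 0 <= x t) -> (forall t, 0 <= y t) -> y s <= 1 ->
  (forall t, (s <= t)%N -> y t.+1 <= (1 - x t.+1) * y t) ->
  forall t, (s <= t)%N -> y t * (1 + (series x t.+1 - series x s.+1)) <= 1.
Proof.
move=> x_ge0 y_ge0 ys1 y_dec; elim=> [|t IH].
  by rewrite leqn0 => /eqP <-; rewrite subrr addr0 mulr1.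
rewrite leq_eqVlt => /orP[/eqP <-|]; first by rewrite subrr addr0 mulr1.
rewrite ltnS => st; have {}IH := IH st; have yS := y_dec t st.
have D_ge0 : 0 <= series x t.+1 - series x s.+1.
  by rewrite sub_series_geq // sumr_ge0.
rewrite [series x t.+2]seriesSr addrAC.
move: (series x t.+1 - series x s.+1) D_ge0 IH => D D_ge0 IH.
have xS := x_ge0 t.+1; have yt := y_ge0 t.
(* (1 - x) (1 + D + x) = (1 + D) - x (D + x) *)
have loss_ge0 : 0 <= x t.+1 * y t * (D + x t.+1).
  by rewrite !mulr_ge0 // addr_ge0.
have yS_mul : y t.+1 * (1 + D + x t.+1) <= (1 - x t.+1) * y t * (1 + D + x t.+1).
  by rewrite ler_wpM2r //; lra.
nra.
Qed.

Lemma mul_cvgry_le1_eq0 (z : R) (f : R ^nat) :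
  0 <= z -> f @ \oo --> +oo -> (\forall n \near \oo, z * f n <= 1) -> z = 0.
Proof.
move=> z_ge0 /cvgryPge f_oo zf_le1; apply/eqP; rewrite eq_le z_ge0 andbT leNgt.
apply/negP => z_gt0.
have [n [fn zfn]] := filter_ex (filterI (f_oo (z^-1 * 2)) zf_le1).
have zfn_ge2 : 2 <= z * f n by rewrite -ler_pdivrMl.
lra.
Qed.

Lemma series_mulr_cvgry (c : R) (u : R ^nat) : 0 < c ->
  series u @ \oo --> +oo -> series (fun t => c * u t) @ \oo --> +oo.
Proof.
move=> c_gt0 /cvgry_ge u_oo; apply/cvgryPge => M.
have [n0 _ u_ge] := u_oo (M / c); exists n0 => // n /= /u_ge.
by rewrite ler_pdivrMr // mulrC !seriesEord mulr_sumr.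
Qed.

End real_sequences.

Section exploration_rate.
Variable R : realType.

Lemma eps_t_ge0 t : 0 <= eps_t R t.
Proof. by rewrite /eps_t divr_ge0 // mulr_ge0 // sqrtr_ge0. Qed.

Lemma eps_t_le1 t : (0 < t)%N -> eps_t R t <= 1.
Proof.
move=> t_gt0; have sqrt_ge1 : 1 <= Num.sqrt (t%:R : R).
  by rewrite -{1}sqrtr1 ler_wsqrtr // ler1n.
by rewrite /eps_t ler_pdivrMr; lra.
Qed.

Lemma eps_t_ge (u N : nat) : (0 < u)%N -> (u <= N * N)%N ->
  (2 * N%:R)^-1 <= eps_t R u.
Proof.
move=> u_gt0 uN.
have N_gt0 : (0 < N)%N by case: N uN => [|//]; rewrite muln0 leqNgt u_gt0.
have sqrt_le : Num.sqrt (u%:R : R) <= N%:R.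
  rewrite -(ger0_norm (ler0n R N)) -sqrtr_sqr ler_wsqrtr //.
  by rewrite -natrX ler_nat -mulnn.
have sqrt_gt0 : (0 : R) < Num.sqrt u%:R by rewrite sqrtr_gt0 ltr0n.
by rewrite /eps_t div1r lef_pV2 ?posrE ?mulr_gt0 ?ltr0n // ler_pM2l.
Qed.

Lemma series_eps_t_sqr_ge N : N%:R / 2 <= series (eps_t R) (N * N).+1.
Proof.
rewrite seriesEord /= big_ord_recl /=.
rewrite -[leLHS]add0r; apply: lerD; first exact: eps_t_ge0.
case: (posnP N) => [->|N_gt0]; first by rewrite mul0r big_ord0.
have sum_const : \sum_(i < N * N) (2 * N%:R)^-1 = N%:R / 2 :> R.
  rewrite sumr_const card_ord -[_ *+ (N * N)]mulr_natl natrM.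
  by field; rewrite pnatr_eq0 -lt0n.
by rewrite -sum_const; apply: ler_sum => i _; apply: eps_t_ge.
Qed.

Lemma series_eps_t_cvgry : series (eps_t R) @ \oo --> +oo.
Proof.
apply/cvgryPge => M; set N := (Num.truncn (2 * M)).+1.
have M_le : M <= N%:R / 2 by have := truncnS_gt (2 * M); rewrite -/N; lra.
exists (N * N).+1 => // n /= Nn; apply: (le_trans M_le).
apply: (le_trans (series_eps_t_sqr_ge N)); rewrite -subr_ge0 sub_series_geq //.
by apply: sumr_ge0 => k _; exact: eps_t_ge0.
Qed.

End exploration_rate.

Section pull_counts.
Variables (K : nat) (Omega : Type) (arm : nat -> Omega -> 'I_K).
Variables (a : 'I_K) (w : Omega).

Local Notation N t := (Npulls arm a t w).

Lemma NpullsS t : N t.+1 = (N t + (arm t.+1 w == a))%N.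
Proof. by rewrite /Npulls big_nat_recr. Qed.

Lemma Npulls_split {s t} : (s <= t)%N ->
  N t = (N s + \sum_(s.+1 <= u < t.+1) (arm u w == a))%N.
Proof. by move=> st; rewrite /Npulls -big_cat_nat. Qed.

Lemma le_Npulls : {homo (fun t => N t) : s t / (s <= t)%N}.
Proof. by move=> s t st; rewrite (Npulls_split st) leq_addr. Qed.

Lemma Npulls_stalls s : (forall u, (s < u)%N -> arm u w != a) ->
  forall t, (N t <= N s)%N.
Proof.
move=> no_pull t; have [st|/ltnW ts] := leqP s t; last exact: le_Npulls.
rewrite (Npulls_split st) big_nat_cond big1 ?addn0 // => u /andP[/andP[su _] _].
by rewrite (negbTE (no_pull u su)).
Qed.

Lemma Npulls_cvgry (R : realType) :
  ((N t)%:R : R) @[t --> \oo] --> +oo <-> forall s, exists2 u, (s < u)%N & arm u w = a.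
Proof.
rewrite cvgrnyP cvgnyPge; split=> [N_oo s|pulls m].
  apply: contrapT => no_pull; have [t0 _ /(_ t0 (leqnn t0))] := N_oo (N s).+1.
  apply/negP; rewrite -leqNgt; apply: Npulls_stalls => u su; apply/eqP => pull.
  by apply: no_pull; exists u.
suff [t0 m_le] : exists t0, (m <= N t0)%N.
  by exists t0 => // t /= /le_Npulls; exact: leq_trans.
elim: m => [|m [t0 m_le]]; first by exists 0%N.
have [[//|u] t0u pull] := pulls t0; exists u.+1.
by rewrite NpullsS pull eqxx addn1 ltnS (leq_trans m_le) ?le_Npulls.
Qed.

End pull_counts.

Section conditional_borel_cantelli.
Context {d} {T : measurableType d} {R : realType} (P : probability T R).
Context {F : nat -> set (set T)} {A : nat -> set T} {rho : R ^nat}.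
Hypothesis F_filtration : is_filtration F.
Hypothesis A_adapted : forall t, F t (A t).
Hypothesis rho_ge0 : forall t, 0 <= rho t.
Hypothesis series_rho_cvgry : series rho @ \oo --> +oo.
Hypothesis prob_A_ge : forall t E, F t E -> ((rho t.+1)%:E * P E <= P (E `&` A t.+1))%E.

Let F_measurable {t E} : F t E -> measurable E := F_filtration.2.1 t E.

Definition miss s t := [set x | forall u, (s < u <= t)%N -> ~ A u x].

Definition miss_after s := [set x | forall u, (s < u)%N -> ~ A u x].

Lemma F_miss s t : F t (miss s t).
Proof.
have [F0 FD FU] := F_filtration.1 t.
have -> : miss s t = setT `\` \bigcup_u (if (s < u <= t)%N then A u else set0).
  apply/seteqP; split=> x /=.
    by move=> xm; split=> // -[u _]; case: ifP => [/xm|].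
  by move=> [_ xU] u su Au; apply: xU; exists u; rewrite ?su.
apply/FD/FU => u; case: ifP => [/andP[_ ut]|_] //.
exact: F_filtration.2.2 u t ut _ (A_adapted u).
Qed.

Lemma measurable_miss_after s : measurable (miss_after s).
Proof.
have -> : miss_after s = \bigcap_t miss s t.
  apply/seteqP; split=> [x xm t _ u /andP[su _]|x xm u su]; first exact: xm.
  by apply: (xm u I); rewrite su leqnn.
by apply: bigcapT_measurable => t; exact: F_measurable (F_miss s t).
Qed.

Lemma missS s t : (s <= t)%N -> miss s t.+1 = miss s t `\` A t.+1.
Proof.
move=> st; apply/seteqP; split=> x /=.
  move=> xm; split; last by apply: xm; rewrite ltnS st leqnn.
  by move=> u /andP[su ut]; apply: xm; rewrite su (leq_trans ut).
move=> [xm At] u /andP[su]; rewrite leq_eqVlt ltnS => /orP[/eqP-> //|ut].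
by apply: xm; rewrite su ut.
Qed.

Lemma prob_missS s t : (s <= t)%N ->
  fine (P (miss s t.+1)) <= (1 - rho t.+1) * fine (P (miss s t)).
Proof.
move=> st; have mM := F_measurable (F_miss s t).
have mA := F_measurable (A_adapted t.+1).
have /fineK PM := fin_num_measure P _ mM.
have /fineK PMA := fin_num_measure P _ (measurableI _ _ mM mA).
rewrite missS // measureD //; last by rewrite -PM ltry.
have := prob_A_ge _ _ (F_miss s t).
rewrite -PM -PMA -EFinM lee_fin => qM_le.
rewrite fineB ?fin_num_measure //; last exact: measurableI.
lra.
Qed.

Lemma prob_miss_le s t : (s <= t)%N ->
  fine (P (miss s t)) * (1 + (series rho t.+1 - series rho s.+1)) <= 1.
Proof.
move: t; apply: (decay_mul_series_le1 rho (fun t => fine (P (miss s t)))) => //.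
- by move=> u; rewrite fine_ge0 ?measure_ge0.
- have mM := F_measurable (F_miss s s).
  by rewrite -lee_fin fineK ?fin_num_measure ?probability_le1.
- exact: prob_missS.
Qed.

Lemma prob_miss_after s : P (miss_after s) = 0%E.
Proof.
have mMa := measurable_miss_after s.
rewrite -(fineK (fin_num_measure P _ mMa)); congr EFin.
apply: (mul_cvgry_le1_eq0 _ (fun t => 1 + (series rho t.+1 - series rho s.+1))).
- by rewrite fine_ge0 ?measure_ge0.
- apply/cvgryPge => M.
  have [n0 _ rho_ge] := cvgry_ge series_rho_cvgry (M - 1 + series rho s.+1).
  by exists n0 => // t /= n0t; have := rho_ge t.+1 (leqW n0t); lra.
exists s => // t /= st; apply: le_trans (prob_miss_le s t st).
have mM := F_measurable (F_miss s t).
rewrite ler_wpM2r //.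
  by rewrite sub_series_geq // addr_ge0 // sumr_ge0.
rewrite fine_le ?fin_num_measure // le_measure ?inE //.
by move=> x xm u /andP[su _]; exact: xm.
Qed.

Lemma prob_infinitely_often :
  P [set x | forall s, exists2 u, (s < u)%N & A u x] = 1%E.
Proof.
have -> : [set x | forall s, exists2 u, (s < u)%N & A u x] = ~` \bigcup_s miss_after s.
  apply/seteqP; split=> x /=.
    by move=> io [s _ xm]; have [u su Au] := io s; exact: xm u su Au.
  move=> xn s; apply: contrapT => nio; apply: xn; exists s => // u su Au.
  by apply: nio; exists u.
have mU := bigcupT_measurable _ measurable_miss_after.
rewrite probability_setC // (negligibleP _ mU).1 ?sube0 //.
apply: negligible_bigcup => s.
exact/(negligibleP _ (measurable_miss_after s)).2/prob_miss_after.
Qed.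

End conditional_borel_cantelli.

(* Unlike [ge0_le_integral], no measurability is needed: the integral of a
   nonnegative function is a supremum over the simple functions below it.
   The F-TaS sampling probabilities need not be measurable. *)
Lemma ge0_le_integral_nonmeas d (T : measurableType d) (R : realType)
    (mu : {measure set T -> \bar R}) (D : set T) (f g : T -> \bar R) :
  (forall x, D x -> 0 <= g x)%E -> (forall x, D x -> g x <= f x)%E ->
  (\int[mu]_(x in D) g x <= \int[mu]_(x in D) f x)%E.
Proof.
move=> g_ge0 gf; have f_ge0 x : D x -> (0 <= f x)%E.
  by move=> Dx; exact: le_trans (g_ge0 x Dx) (gf x Dx).
rewrite (ge0_integralE _ g_ge0) (ge0_integralE _ f_ge0) /=.
apply: ereal_sup_le => _ [h hg <-]; exists h => //= x.
apply: le_trans (hg x) _; rewrite /patch; case: ifP => // /[!inE]; exact: gf.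
Qed.

Section ftas_exploration.
Variables (R : realType) (K : nat) (a : 'I_K).

Lemma pic_unif_gt0 : 0 < crd (pic_unif R K) a.
Proof. by rewrite /crd mxE invr_gt0 ltr0n (leq_ltn_trans _ (ltn_ord a)). Qed.

Lemma pic_pre_gt0 (p0 : 'rV[R]_K) : valid_rates p0 ->
  ((0 < K0 p0)%N -> \sum_b crd p0 b < 1) -> 0 < crd (pic_pre p0) a.
Proof.
move=> [p0_01 psum_le1] psum_lt1; rewrite /crd mxE -/(crd p0 a).
case: eqP => [K0_eq0|/eqP K0_neq0].
  have pa_neq0 : crd p0 a != 0.
    apply: contra_eqN K0_eq0 => /eqP pa0; rewrite -lt0n; apply/card_gt0P.
    by exists a; rewrite inE; apply/eqP.
  have pa_gt0 : 0 < crd p0 a by rewrite lt0r pa_neq0; case/andP: (p0_01 a).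
  have slack_ge0 : 0 <= (1 - \sum_b crd p0 b) / K%:R.
    by rewrite divr_ge0 // subr_ge0.
  lra.
case: ifP => // _.
by rewrite divr_gt0 ?subr_gt0 ?psum_lt1 ?ltr0n // lt0n.
Qed.

Lemma ftas_pi_ge Omega (arm : nat -> Omega -> 'I_K) (rew : nat -> Omega -> R)
    theta0 wsel pic t w :
  (forall lam, 0 <= crd (wsel lam) a) -> (0 < t)%N ->
  eps_t R t * crd pic a <= ftas_pi arm rew theta0 wsel pic t w a.
Proof.
move=> wsel_ge0 t_gt0; rewrite /ftas_pi lerDr mulr_ge0 // subr_ge0.
exact: eps_t_le1.
Qed.

End ftas_exploration.

Theorem propositionC2
  (R : realType) (K : nat)
  (theta : 'rV[R]_K) (theta_in : in_Theta theta)
  (* fairness rates p(·) (constant in the pre-specified case), exploration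
     vector π_c, and the selection w*_p(·) *)
  (p : 'rV[R]_K -> 'rV[R]_K) (pic : 'rV[R]_K) (wsel : 'rV[R]_K -> 'rV[R]_K)
  (theta0 : 'rV[R]_K)
  (Hfair :
     (exists p0 : 'rV[R]_K,
        [/\ valid_rates p0,
            (0 < K0 p0)%N -> \sum_a crd p0 a < 1,
            p = (fun _ => p0) & pic = pic_pre p0])
     \/
     [/\ continuous p, (forall lam, valid_rates (p lam)) & pic = pic_unif R K])
  (Hw : is_wstar p wsel)
  (* the probability space, the filtration and the process *)
  (d : measure_display) (Omega : measurableType d) (P : probability Omega R)
  (F : nat -> set (set Omega)) (HF : is_filtration F)
  (arm : nat -> Omega -> 'I_K) (rew : nat -> Omega -> R)
  (Harm_adapted : forall t a, F t (arm t @^-1` [set a]))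
  (Hrew_adapted : forall t (B : set R), measurable B -> F t (rew t @^-1` B))
  (* at round t >= 1, given F_{t-1}, a_t ~ π(t) *)
  (Harm_law : forall t, (0 < t)%N -> forall E, F t.-1 E -> forall a,
      P (E `&` arm t @^-1` [set a]) =
      (\int[P]_(w in E) (ftas_pi arm rew theta0 wsel pic t w a)%:E)%E)
  (* at round t >= 1, given F_{t-1} and a_t, r_t ~ N(θ_{a_t}, 1) *)
  (Hrew_law : forall t, (0 < t)%N -> forall E, F t.-1 E -> forall a (C : set R),
      measurable C ->
      P (E `&` arm t @^-1` [set a] `&` rew t @^-1` C) =
      (P (E `&` arm t @^-1` [set a]) * normal_prob (crd theta a) 1 C)%E) :
  forall a : 'I_K,
    P [set w | ((Npulls arm a t w)%:R : R) @[t --> \oo] --> +oo] = 1%E.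
Proof.
move=> a; have c_gt0 : 0 < crd pic a.
  case: Hfair => [[p0 [p0_valid psum_lt1 _ ->]]|[_ _ ->]].
    exact: pic_pre_gt0.
  exact: pic_unif_gt0.
set c := crd pic a; pose rho t := c * eps_t R t.
have rho_ge0 t : 0 <= rho t by rewrite mulr_ge0 ?eps_t_ge0 ?ltW.
have series_rho_cvgry : series rho @ \oo --> +oo.
  exact: series_mulr_cvgry (series_eps_t_cvgry R).
have prob_pull_ge t E : F t E ->
    ((rho t.+1)%:E * P E <= P (E `&` arm t.+1 @^-1` [set a]))%E.
  move=> FE; rewrite (Harm_law t.+1 (ltn0Sn t) E FE a) -integral_cst //.
    apply: ge0_le_integral_nonmeas => w _; rewrite lee_fin // /rho mulrC.
    by apply: ftas_pi_ge => // lam; case/andP: ((Hw lam).1.1 a).2.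
  exact: HF.2.1 t E FE.
rewrite (_ : [set w | _] = [set w | forall s, exists2 u, (s < u)%N & arm u w = a]).
  exact: (prob_infinitely_often P HF (fun t => Harm_adapted t a) rho_ge0
    series_rho_cvgry prob_pull_ge).
by apply/seteqP; split=> w; rewrite /= Npulls_cvgry.
Qed.
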